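(* Let $C$ be a non-empty strictly convex cone in a topological real vector space $V$ and $f:C\to\mathbb{R}$ a non-negative positively homogeneous function ($f(\lambda x)=\lambda f(x)$ for $x\in C$, $\lambda>0$). Then for any real number $\alpha>1$ the following are equivalent: (1) $f$ is continuous and $f^{\alpha}$ is strictly convex. (2) $f$ is continuous and strictly quasi-convex. (3) $f$ is strictly sub-convex and $f^{-1}(0)\subseteq\{0\}$.
   Context: Topological real vector spaces are not assumed Hausdorff; $C$ carries the subspace topology. A cone is a subset $C$ with $\lambda C\subseteq C$ for all real $\lambda>0$ (it may or may not contain $0$). A function $g$ on a convex set $C$ is strictly convex if $g((1-t)x+ty)<(1-t)g(x)+tg(y)$ for all distinct $x,y\in C$, $t\in(0,1)$; strictly quasi-convex if $g((1-t)x+ty)<\max\{g(x),g(y)\}$ for such $x,y,t$. For $f:C\to\mathbb{R}$, $S_r(f)=\{x\in C: f(x)\le r\}$. For a subset $S$, $\mathrm{Aff}(S)$ is its affine hull; $\mathrm{ri}(S)$, $\mathrm{rc}(S)$ are the interior and closure of $S$ in the subspace topology of $\mathrm{Aff}(S)$. $]x,y[=\{(1-t)x+ty: t\in[0,1]\}\setminus\{x,y\}$. A subset $C$ is strictly convex if for any two distinct $x,y\in\mathrm{rc}(C)$, $]x,y[\subseteq\mathrm{ri}(C)$. $f$ is strictly sub-convex if $S_r(f)$ is strictly convex for every $r\in\mathbb{R}$. *)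

From HB Require Import structures.
From mathcomp Require Import all_boot all_order all_algebra.
From mathcomp Require Import all_classical all_reals all_analysis.
Set Implicit Arguments. Unset Strict Implicit. Unset Printing Implicit Defensive.
Import Order.TTheory GRing.Theory Num.Theory.
Import numFieldNormedType.Exports.
Local Open Scope classical_set_scope.
Local Open Scope ring_scope.

Section Defs.
Variables (R : realType) (V : topologicalLmodType R).

Definition is_cone (C : set V) : Prop :=
  forall (l : R) (x : V), 0 < l -> C x -> C (l *: x).

Definition Aff (S : set V) : set V :=
  [set x | exists (n : nat) (t : 'I_n -> R) (p : 'I_n -> V),
     (forall i, S (p i)) /\ \sum_(i < n) t i = 1 /\ x = \sum_(i < n) t i *: p i].

(* relative interior: interior of S in the subspace topology of Aff S *)
Definition ri (S : set V) : set V :=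
  [set x | Aff S x /\ exists U : set V, open U /\ U x /\ (U `&` Aff S `<=` S)].

(* relative closure: closure of S in the subspace topology of Aff S *)
Definition rc (S : set V) : set V :=
  [set x | Aff S x /\ forall U : set V, open U -> U x ->
     exists y, U y /\ Aff S y /\ S y].

Definition open_segment (x y : V) : set V :=
  [set z | (exists t : R, 0 <= t <= 1 /\ z = (1 - t) *: x + t *: y)
           /\ z <> x /\ z <> y].

Definition strictly_convex_set (C : set V) : Prop :=
  forall x y, rc C x -> rc C y -> x <> y -> open_segment x y `<=` ri C.

Definition strictly_convex_fun (C : set V) (g : V -> R) : Prop :=
  forall x y (t : R), C x -> C y -> x <> y -> 0 < t < 1 ->
    g ((1 - t) *: x + t *: y) < (1 - t) * g x + t * g y.

Definition strictly_quasi_convex_fun (C : set V) (g : V -> R) : Prop :=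
  forall x y (t : R), C x -> C y -> x <> y -> 0 < t < 1 ->
    g ((1 - t) *: x + t *: y) < Num.max (g x) (g y).

Definition sublevel (C : set V) (f : V -> R) (r : R) : set V :=
  [set x | C x /\ f x <= r].

Definition strictly_sub_convex (C : set V) (f : V -> R) : Prop :=
  forall r : R, strictly_convex_set (sublevel C f r).

End Defs.

From HB Require Import structures.
From mathcomp Require Import all_boot all_order all_algebra.
From mathcomp Require Import all_classical all_reals all_analysis.
From mathcomp Require Import ring lra.
Import Order.TTheory GRing.Theory Num.Theory.
Import numFieldNormedType.Exports.
Local Open Scope classical_set_scope.
Local Open Scope ring_scope.
Set Implicit Arguments. Unset Strict Implicit. Unset Printing Implicit Defensive.

(* Homogeneity reduces everything to the sublevel sets S_r = r S_1 of f.
   Strict convexity of the cone C makes C minus 0 relatively open and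
   relatively closed in Aff C, and forces a pointed C to be a single ray.
   (1) <-> (2): rescaling x and y to the level set f = 1 shows that a strictly
   quasi-convex f is convex, and then f^alpha is strictly convex because
   s |-> s^alpha is strictly convex on [0, oo); conversely s |-> s^alpha is
   increasing.  (2) -> (3): by continuity ri S_r contains every z in ri C with
   f z < r, and strict quasi-convexity gives f < r on the open segments of
   rc S_r.  (3) -> (2): f < r on ri S_r because f grows linearly along rays;
   continuity at x <> 0 comes from placing multiples of x in suitable S_r, and
   at 0 either C contains a line through 0, which puts 0 in ri S_r, or C is a
   ray. *)

Section TopologicalLmodule.
Variables (R : realType) (V : topologicalLmodType R).

Lemma continuous_line (u v : V) : continuous (fun s : R => v + s *: u).
Proof.
move=> s.
apply: (@continuous_comp R (V * V)%type V (fun s => (v, s *: u)) (fun z => z.1 + z.2));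
  last exact: add_continuous.
apply: cvg_pair; first exact: cvg_cst.
apply: (@continuous_comp R (R^o * V)%type V (fun s => (s, u)) (fun z => z.1 *: z.2));
  last exact: scale_continuous.
exact: (cvg_pair cvg_id (cvg_cst u)).
Qed.

Lemma continuous_affine (a : R) (b : V) : continuous (fun w : V => a *: w + b).
Proof.
move=> w.
apply: (@continuous_comp V (V * V)%type V (fun w => (a *: w, b)) (fun z => z.1 + z.2));
  last exact: add_continuous.
apply: (cvg_pair _ (cvg_cst b)).
apply: (@continuous_comp V (R^o * V)%type V (fun w => (a, w)) (fun z => z.1 *: z.2));
  last exact: scale_continuous.
exact: (cvg_pair (cvg_cst a) cvg_id).
Qed.

Lemma open_affine_preimage (a : R) (b : V) (U : set V) :
  open U -> open ((fun w => a *: w + b) @^-1` U).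
Proof. by move=> oU; apply: (proj1 (continuousP _) (@continuous_affine a b)). Qed.

Lemma open_line_ball (u v : V) (s0 : R) (U : set V) : open U -> U (v + s0 *: u) ->
  exists2 e : R, 0 < e & forall s, `|s - s0| < e -> U (v + s *: u).
Proof.
move=> oU Us0.
have : nbhs s0 ((fun s : R => v + s *: u) @^-1` U).
  by apply: continuous_line; apply: open_nbhs_nbhs.
move=> /nbhs_ballP [e e0 He]; exists e => // s hs; apply: He.
by rewrite /ball /= distrC.
Qed.

Lemma within_continuousP (C : set V) (f : V -> R) :
  {within C, continuous f} <-> forall x, C x -> forall e : R, 0 < e ->
    exists U, [/\ open U, U x & forall y, U y -> C y -> `|f x - f y| < e].
Proof.
split=> [/subspace_continuousP fC x Cx e e0 | H].
  have /(_ (within_filter _ _)) := proj1 (cvgrPdist_lt _ _) (fC x Cx) e e0.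
  rewrite near_withinE /= nbhsE => -[U [oU Ux] HU].
  by exists U; split => // y Uy Cy; apply: HU.
apply/subspace_continuousP => x Cx.
apply/cvgrPdist_lt => e e0; rewrite near_withinE /= nbhsE.
have [U [oU Ux HU]] := H x Cx e e0.
by exists U => // y Uy Cy; apply: HU.
Qed.

Lemma Aff_comb3 (S : set V) a b c (x y z : R) : S a -> S b -> S c -> x + y + z = 1 ->
  Aff S (x *: a + y *: b + z *: c).
Proof.
move=> Sa Sb Sc xyz.
exists 3%N, (fun i : 'I_3 => nth 0 [:: x; y; z] i),
  (fun i : 'I_3 => nth 0 [:: a; b; c] i).
split; first by move=> [[|[|[|k]]] hk].
by split; rewrite !big_ord_recr big_ord0 /= !add0r.
Qed.

Lemma Aff_comb2 (S : set V) a b (x y : R) : S a -> S b -> x + y = 1 ->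
  Aff S (x *: a + y *: b).
Proof.
move=> Sa Sb xy; have := Aff_comb3 Sa Sb Sa (x := x) (y := y) (z := 0).
by rewrite scale0r !addr0; apply.
Qed.

Lemma subset_Aff (S : set V) : S `<=` Aff S.
Proof.
move=> a Sa; have := Aff_comb2 Sa Sa (x := 1) (y := 0).
by rewrite scale1r scale0r !addr0; apply.
Qed.

Lemma Aff_subset (S T : set V) : S `<=` T -> Aff S `<=` Aff T.
Proof. by move=> ST x [n [t [p [Sp [t1 ->]]]]]; exists n, t, p; split=> // i; apply: ST. Qed.

Lemma subset_rc (S : set V) : S `<=` rc S.
Proof.
move=> x Sx; split; first exact: subset_Aff.
by move=> U _ Ux; exists x; split=> //; split=> //; apply: subset_Aff.
Qed.

Lemma rc_subset (S T : set V) : S `<=` T -> rc S `<=` rc T.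
Proof.
move=> ST x [Ax rcx]; split; first exact: Aff_subset Ax.
move=> U oU Ux; have [y [Uy [Ay Sy]]] := rcx U oU Ux.
by exists y; split=> //; split; [exact: Aff_subset Ay | exact: ST].
Qed.

Lemma ri_subset (S : set V) : ri S `<=` S.
Proof. by move=> x [Ax [U [_ [Ux US]]]]; apply: US. Qed.

Lemma scaler_neq (x : V) (a b : R) : x <> 0 -> a != b -> a *: x <> b *: x.
Proof.
move=> x0 ab axbx; apply: x0; apply/eqP.
have : (a - b) *: x == 0 by rewrite scalerBl axbx subrr.
by rewrite scaler_eq0 subr_eq0 (negbTE ab).
Qed.

Lemma combxx (a : V) (t : R) : (1 - t) *: a + t *: a = a.
Proof. by rewrite -scalerDl subrK scale1r. Qed.

Lemma comb_neq_l (a b : V) (t : R) : a <> b -> 0 < t -> (1 - t) *: a + t *: b <> a.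
Proof.
move=> ab t0 h; apply: ab; apply/eqP.
have : t *: (b - a) == 0.
  rewrite -(subrr a) -{2}h scalerBr scalerBl scale1r.
  by rewrite addrAC [a - _ - _]addrAC subrr add0r addrC.
by rewrite scaler_eq0 (gt_eqF t0) subr_eq0 eq_sym.
Qed.

Lemma comb_neq_r (a b : V) (t : R) : a <> b -> t < 1 -> (1 - t) *: a + t *: b <> b.
Proof.
move=> ab t1; have := @comb_neq_l b a (1 - t) (nesym ab).
rewrite subr_gt0 (_ : 1 - (1 - t) = t); last by ring.
by rewrite addrC; apply.
Qed.

Lemma open_segment_comb (a b : V) (t : R) : a <> b -> 0 < t < 1 ->
  open_segment a b ((1 - t) *: a + t *: b).
Proof.
move=> ab /andP[t0 t1]; split; first by exists t; rewrite (ltW t0) (ltW t1).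
by split; [exact: comb_neq_l | exact: comb_neq_r].
Qed.

Lemma open_segment_mid (a b : V) : a <> b -> open_segment a b (2^-1 *: (a + b)).
Proof.
move=> ab; have := @open_segment_comb a b 2^-1 ab.
by rewrite (_ : 1 - 2^-1 = 2^-1 :> R) -?scalerDr; [apply; apply/andP; split; lra | field].
Qed.

Lemma strictly_convex_set_mid (S : set V) a b : strictly_convex_set S ->
  rc S a -> rc S b -> a <> b -> ri S (2^-1 *: (a + b)).
Proof. by move=> Sscvx Sa Sb ab; apply: Sscvx (open_segment_mid ab). Qed.

End TopologicalLmodule.

Section StrictlyConvexCone.
Variables (R : realType) (V : topologicalLmodType R) (C : set V).
Hypothesis coneC : is_cone C.
Hypothesis scvxC : strictly_convex_set C.

Lemma cone_convex a b (t : R) : C a -> C b -> 0 <= t <= 1 -> C ((1 - t) *: a + t *: b).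
Proof.
move=> Ca Cb /andP[t0 t1].
have [<-|ab] := eqVneq a b; first by rewrite combxx.
have [->|tn0] := eqVneq t 0; first by rewrite subr0 scale1r scale0r addr0.
have [->|tn1] := eqVneq t 1; first by rewrite subrr scale0r add0r scale1r.
apply: ri_subset; apply: (scvxC (subset_rc Ca) (subset_rc Cb) (elimN eqP ab)).
by apply: open_segment_comb; [exact/eqP | rewrite !lt_neqAle eq_sym tn0 tn1 t0 t1].
Qed.

Lemma Aff_cone_scale (l : R) x : 0 < l -> Aff C x -> Aff C (l *: x).
Proof.
move=> l0 [n [t [p [Cp [t1 ->]]]]]; exists n, t, (fun i => l *: p i).
split; first by move=> i; apply: coneC.
by split=> //; rewrite scaler_sumr; apply: eq_bigr => i _; rewrite !scalerA mulrC.
Qed.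

Lemma rc_cone_scale (l : R) x : 0 < l -> rc C x -> rc C (l *: x).
Proof.
move=> l0 [Ax rcx]; split; first exact: Aff_cone_scale.
move=> U oU Ulx.
have := rcx _ (open_affine_preimage l 0 oU); rewrite /preimage /= addr0.
move=> /(_ Ulx) [y [Uly [Ay Cy]]]; rewrite addr0 in Uly.
by exists (l *: y); split=> //; split; [exact: Aff_cone_scale | exact: coneC].
Qed.

Lemma cone_rc_neq0 x : rc C x -> x <> 0 -> C x.
Proof.
move=> rcx x0.
have x2x : x <> 2 *: x by rewrite -{1}[x]scale1r; apply: scaler_neq => //; apply/eqP; lra.
have rc2x : rc C (2 *: x) by apply: rc_cone_scale => //; lra.
have := ri_subset (strictly_convex_set_mid scvxC rcx rc2x x2x) => C3x.
have -> : x = (2 / 3) *: (2^-1 *: (x + 2 *: x)).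
  rewrite scalerA scalerDr scalerA -scalerDl -{1}[x]scale1r.
  by congr (_ *: _); field.
by apply: coneC => //; lra.
Qed.

Lemma cone_ri_neq0 p : C p -> p <> 0 -> ri C p.
Proof.
move=> Cp p0.
have pp : 2^-1 *: p <> (3 / 2) *: p by apply: scaler_neq => //; apply/eqP; lra.
have Cp1 : C (2^-1 *: p) by apply: coneC.
have Cp2 : C ((3 / 2) *: p) by apply: coneC.
have := strictly_convex_set_mid scvxC (subset_rc Cp1) (subset_rc Cp2) pp.
by rewrite -scalerDl scalerA (_ : 2^-1 * (2^-1 + 3 / 2) = 1) ?scale1r //; field.
Qed.

(* [y - s p = y + s p - s (2 p)] is an affine combination of points of C. *)
Lemma Aff_cone_line y p (s : R) : C y -> C p -> Aff C (y - s *: p).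
Proof.
move=> Cy Cp; have C2p : C (2 *: p) by apply: coneC.
have := Aff_comb3 Cy Cp C2p (x := 1) (y := s) (z := - s).
rewrite scale1r scalerA -[y + _ + _]addrA -scalerDl (_ : s + - s * 2 = - s) ?scaleNr;
  last by ring.
by apply; ring.
Qed.

Lemma Aff_cone_opp p : C p -> Aff C (- p).
Proof.
move=> Cp; have := Aff_cone_line 2 Cp Cp.
by rewrite -{1}[p]scale1r -scalerBl (_ : 1 - 2 = -1) ?scaleN1r //; ring.
Qed.

(* [s^-1 (y - s p) = - p + s^-1 y] lies in C and tends to [- p]. *)
Lemma rc_cone_opp_unbounded y p : C y -> C p ->
  (forall M : R, exists2 s, M < s & C (y - s *: p)) -> rc C (- p).
Proof.
move=> Cy Cp unbounded; split; first exact: Aff_cone_opp.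
move=> U oU Up.
have [e e0 He] : exists2 e : R, 0 < e & forall s, `|s - 0| < e -> U (- p + s *: y).
  by apply: open_line_ball => //; rewrite scale0r addr0.
have [s s_gt Cs] := unbounded (2 / e).
have s0 : 0 < s by apply: lt_trans s_gt; rewrite divr_gt0.
exists (s^-1 *: (y - s *: p)); split.
  rewrite scalerBr scalerA mulVf ?gt_eqF // scale1r addrC; apply: He.
  rewrite subr0 ger0_norm ?invr_ge0 ?ltW // -[s^-1]div1r ltr_pdivrMr // mulrC.
  by move: s_gt; rewrite ltr_pdivrMr //; lra.
have Cs' : C (s^-1 *: (y - s *: p)) by apply: coneC; rewrite ?invr_gt0.
by split=> //; apply: subset_Aff.
Qed.

Lemma rc_cone_line_sup (A : set R) y p : C y -> C p -> has_sup A ->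
  (forall s, A s -> C (y - s *: p)) -> rc C (y - sup A *: p).
Proof.
move=> Cy Cp supA CA; split; first exact: Aff_cone_line.
move=> U oU Uz.
have [e e0 He] : exists2 e : R, 0 < e & forall s, `|s - - sup A| < e -> U (y + s *: p).
  by apply: open_line_ball => //; rewrite scaleNr.
have [s As s_gt] := sup_adherent e0 supA.
have s_le : s <= sup A := sup_upper_bound supA As.
exists (y - s *: p); split; last by split; [exact: Aff_cone_line | exact: CA].
by rewrite -scaleNr; apply: He; rewrite ltr_norml; apply/andP; split; lra.
Qed.

(* Move from y in the direction - p as far as C allows: the endpoint lies in
   rc C, so it must be 0, since a nonzero endpoint would lie in ri C. *)
Lemma pointed_cone_ray (pointedC : forall q, C q -> C (- q) -> q = 0) p y :
  C p -> p <> 0 -> C y -> y <> 0 -> exists2 l : R, 0 < l & y = l *: p.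
Proof.
move=> Cp p0 Cy y0.
pose A := [set s : R | 0 <= s /\ C (y - s *: p)].
have A0 : A 0 by rewrite /A /= scale0r subr0.
have ubA : has_ubound A.
  apply: contrapT => /has_ubPn unbounded; apply: (p0); apply: (pointedC _ Cp).
  apply: cone_rc_neq0; last by move=> /eqP; rewrite oppr_eq0 => /eqP.
  apply: (rc_cone_opp_unbounded Cy Cp) => M.
  by have [s [_ Cs] Ms] := unbounded M; exists s.
have supA : has_sup A by split=> //; exists 0.
have sup_ge0 : 0 <= sup A := sup_upper_bound supA A0.
have rcz := rc_cone_line_sup Cy Cp supA (fun s As => As.2).
have [/subr0_eq z0|z0] := eqVneq (y - sup A *: p) 0.
  exists (sup A) => //; rewrite lt_neqAle sup_ge0 andbT.
  by apply/eqP => s0; apply: y0; rewrite z0 -s0 scale0r.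
have [_ [U [oU [Uz UC]]]] := cone_ri_neq0 (cone_rc_neq0 rcz (elimN eqP z0)) (elimN eqP z0).
have [e e0 He] : exists2 e : R, 0 < e & forall s, `|s - - sup A| < e -> U (y + s *: p).
  by apply: open_line_ball => //; rewrite scaleNr.
have : A (sup A + e / 2).
  rewrite /A /=; split; first lra.
  apply: UC; split; last exact: Aff_cone_line.
  by rewrite -scaleNr; apply: He; rewrite ltr_norml; apply/andP; split; lra.
by move=> /(sup_upper_bound supA); lra.
Qed.

End StrictlyConvexCone.

Section PowR.
Variables (R : realType) (alpha : R).
Hypothesis alpha_gt1 : 1 < alpha.

Let alpha_gt0 : 0 < alpha := lt_trans ltr01 alpha_gt1.

Lemma powR_le_nneg (u v : R) : 0 <= u -> u <= v -> u `^ alpha <= v `^ alpha.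
Proof.
by move=> u0 uv; apply: ge0_ler_powR; rewrite ?nnegrE ?(ltW alpha_gt0) ?(le_trans u0 uv).
Qed.

Lemma powR_lt_nneg (u v : R) : 0 <= u -> u < v -> u `^ alpha < v `^ alpha.
Proof.
by move=> u0 uv; apply: gt0_ltr_powR; rewrite ?nnegrE ?(le_trans u0 (ltW uv)).
Qed.

(* [x^alpha = x x^(alpha - 1) > x (1 + (alpha - 1) ln x)] and [ln x >= 1 - 1/x]. *)
Lemma bernoulli_powR (x : R) : 0 < x -> x != 1 -> 1 + alpha * (x - 1) < x `^ alpha.
Proof.
move=> x0 x1.
have ln_ge : 1 - x^-1 <= ln x.
  have := expR_ge1Dx (ln x^-1).
  by rewrite lnK ?posrE ?invr_gt0 // lnV ?posrE //; lra.
have powB1_gt : 1 + (alpha - 1) * ln x < x `^ (alpha - 1).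
  rewrite /powR gt_eqF //; apply: expR_gt1Dx.
  by rewrite mulf_neq0 ?ln_eq0 // subr_eq0 gt_eqF.
rewrite -mulr_powRB1 ?(ltW x0) //.
have -> : 1 + alpha * (x - 1) = x * (1 + (alpha - 1) * (1 - x^-1)).
  by field; rewrite gt_eqF.
rewrite ltr_pM2l //; apply: le_lt_trans powB1_gt.
by rewrite lerD2l ler_wpM2l // subr_ge0 ltW.
Qed.

Lemma powR_tangent_lt (u v : R) : 0 < u -> 0 <= v -> v != u ->
  u `^ alpha + alpha * u `^ alpha * (v / u - 1) < v `^ alpha.
Proof.
move=> u0 v0 vu.
have ua_gt0 : 0 < u `^ alpha by apply: powR_gt0.
have [->|vn0] := eqVneq v 0.
  rewrite mul0r powR0 ?(gt_eqF alpha_gt0) //.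
  have : 0 < u `^ alpha * (alpha - 1) by rewrite mulr_gt0 // subr_gt0.
  by nra.
have vu1 : v / u != 1.
  by apply: contra vu => /eqP vu1; rewrite -[v](mulfVK (lt0r_neq0 u0)) vu1 mul1r.
have v_gt0 : 0 < v by rewrite lt0r vn0.
have vuu : v `^ alpha = (v / u) `^ alpha * u `^ alpha.
  by rewrite -powRM ?divr_ge0 ?(ltW u0) // mulfVK // lt0r_neq0.
have := bernoulli_powR (divr_gt0 v_gt0 u0) vu1.
by rewrite -(ltr_pM2r ua_gt0) vuu; lra.
Qed.

(* Average the strict tangent-line inequalities at the mean m. *)
Lemma powR_strictly_convex (u v t : R) : 0 <= u -> 0 <= v -> u != v -> 0 < t < 1 ->
  ((1 - t) * u + t * v) `^ alpha < (1 - t) * u `^ alpha + t * v `^ alpha.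
Proof.
move=> u0 v0 uv /andP[t0 t1].
set m := (1 - t) * u + t * v.
have m0 : 0 < m.
  rewrite /m; case: (ltgtP u v) uv => // [uv' _ | vu' _].
    have : 0 < t * (v - u) by rewrite mulr_gt0 // subr_gt0.
    lra.
  have : 0 < (1 - t) * (u - v) by rewrite mulr_gt0 // subr_gt0.
  lra.
have mu : u != m by apply: contra uv => /eqP um; apply/eqP; rewrite /m in um; nra.
have mv : v != m by apply: contra uv => /eqP vm; apply/eqP; rewrite /m in vm; nra.
have Tu := powR_tangent_lt m0 u0 mu.
have Tv := powR_tangent_lt m0 v0 mv.
have mean0 : (1 - t) * (u / m - 1) + t * (v / m - 1) = 0.
  by rewrite /m; field; rewrite gt_eqF.
set K := alpha * m `^ alpha in Tu Tv.
have Tu' : (1 - t) * (m `^ alpha + K * (u / m - 1)) < (1 - t) * u `^ alpha.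
  by rewrite ltr_pM2l // subr_gt0.
have Tv' : t * (m `^ alpha + K * (v / m - 1)) < t * v `^ alpha by rewrite ltr_pM2l.
have : (1 - t) * (K * (u / m - 1)) + t * (K * (v / m - 1)) = 0.
  by rewrite mulrCA (mulrCA t) -mulrDr mean0 mulr0.
lra.
Qed.

End PowR.

Section HomogeneousFunction.
Variables (R : realType) (V : topologicalLmodType R) (C : set V) (f : V -> R).
Hypothesis coneC : is_cone C.
Hypothesis scvxC : strictly_convex_set C.
Hypothesis f_ge0 : forall x, C x -> 0 <= f x.
Hypothesis f_hom : forall (l : R) x, 0 < l -> C x -> f (l *: x) = l * f x.

Lemma hom_f0 : C 0 -> f 0 = 0.
Proof. by move=> C0; have := f_hom (l := 2) (ltr0Sn _ _) C0; rewrite scaler0; lra. Qed.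

Section StrictlyQuasiConvex.
Hypothesis sqcf : strictly_quasi_convex_fun C f.

Lemma sqc_gt0 x : C x -> x <> 0 -> 0 < f x.
Proof.
move=> Cx x0.
have C2x : C (2 *: x) by apply: coneC.
have x2x : x <> 2 *: x by rewrite -{1}[x]scale1r; apply: scaler_neq => //; apply/eqP; lra.
have t12 : 0 < (2^-1 : R) < 1 by apply/andP; split; lra.
have := sqcf Cx C2x x2x t12.
rewrite -{2}[x]scale1r !scalerA -scalerDl !f_hom //; try lra.
have := f_ge0 Cx; rewrite le_eqVlt => /orP[/eqP <-|//].
by rewrite !mulr0 maxxx ltxx.
Qed.

Lemma sqc_eq0 x : C x -> f x = 0 -> x = 0.
Proof. by move=> Cx fx0; apply: contrapT => /(sqc_gt0 Cx); rewrite fx0 ltxx. Qed.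

(* Rescale x and y to the level set f = 1; strict quasi-convexity there
   gives f <= 1 on the segment, and homogeneity transports it back. *)
Lemma sqc_convex x y (t : R) : C x -> C y -> 0 < t < 1 ->
  f ((1 - t) *: x + t *: y) <= (1 - t) * f x + t * f y.
Proof.
move=> Cx Cy /andP[t0 t1].
have [<-|xy] := eqVneq x y; first by rewrite combxx -mulrDl subrK mul1r.
have [x0|x0] := eqVneq x 0.
  by rewrite x0 in Cx *; rewrite scaler0 add0r f_hom // hom_f0 //; lra.
have [y0|y0] := eqVneq y 0.
  by rewrite y0 in Cy *; rewrite scaler0 addr0 f_hom ?hom_f0 ?subr_gt0 //; lra.
have fx0 := sqc_gt0 Cx (elimN eqP x0).
have fy0 := sqc_gt0 Cy (elimN eqP y0).
set m := (1 - t) * f x + t * f y.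
have m0 : 0 < m by rewrite /m; nra.
set s := t * f y / m.
have s01 : 0 < s < 1.
  by rewrite divr_gt0 ?mulr_gt0 //= ltr_pdivrMr // mul1r /m; nra.
set u := (f x)^-1 *: x; set v := (f y)^-1 *: y.
have Cu : C u by apply: coneC; rewrite ?invr_gt0.
have Cv : C v by apply: coneC; rewrite ?invr_gt0.
have fu : f u = 1 by rewrite f_hom ?invr_gt0 // mulVf // gt_eqF.
have fv : f v = 1 by rewrite f_hom ?invr_gt0 // mulVf // gt_eqF.
have fw : f ((1 - s) *: u + s *: v) <= 1.
  have [<-|uv] := eqVneq u v; first by rewrite combxx fu.
  by have := sqcf Cu Cv (elimN eqP uv) s01; rewrite fu fv maxxx => /ltW.
have -> : (1 - t) *: x + t *: y = m *: ((1 - s) *: u + s *: v).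
  rewrite scalerDr !scalerA /s /m.
  by congr (_ *: _ + _ *: _); field; rewrite ?gt_eqF.
rewrite f_hom //; last by apply: cone_convex => //; case/andP: s01 => *; rewrite !ltW.
by rewrite -{2}[m]mulr1 ler_wpM2l // ltW.
Qed.

Lemma sqc_powR_strictly_convex (alpha : R) : 1 < alpha ->
  strictly_convex_fun C (fun x => f x `^ alpha).
Proof.
move=> alpha_gt1 x y t Cx Cy xy t01 /=.
have Cz : C ((1 - t) *: x + t *: y).
  by apply: cone_convex => //; case/andP: t01 => *; rewrite !ltW.
have [fxy|fxy] := eqVneq (f x) (f y).
  have := sqcf Cx Cy xy t01; rewrite -fxy maxxx => /(powR_lt_nneg alpha_gt1 (f_ge0 Cz)).
  by rewrite -mulrDl subrK mul1r.
apply: le_lt_trans (powR_strictly_convex alpha_gt1 (f_ge0 Cx) (f_ge0 Cy) fxy t01).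
exact: (powR_le_nneg alpha_gt1 (f_ge0 Cz) (sqc_convex Cx Cy t01)).
Qed.

End StrictlyQuasiConvex.

Lemma powR_strictly_convex_sqc (alpha : R) : 1 < alpha ->
  strictly_convex_fun C (fun x => f x `^ alpha) -> strictly_quasi_convex_fun C f.
Proof.
move=> alpha_gt1 scvxfa x y t Cx Cy xy t01.
have /= fz_lt := scvxfa _ _ _ Cx Cy xy t01; case/andP: t01 => t0 t1.
set M := Num.max (f x) (f y).
have M0 : 0 <= M by rewrite le_max f_ge0.
have Mx : (1 - t) * f x `^ alpha <= (1 - t) * M `^ alpha.
  rewrite ler_wpM2l ?subr_ge0 ?(ltW t1) //.
  by apply: (powR_le_nneg alpha_gt1); rewrite ?f_ge0 ?le_max ?lexx.
have My : t * f y `^ alpha <= t * M `^ alpha.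
  rewrite ler_wpM2l ?(ltW t0) //.
  by apply: (powR_le_nneg alpha_gt1); rewrite ?f_ge0 ?le_max ?lexx ?orbT.
rewrite ltNge; apply/negP => /(powR_le_nneg alpha_gt1 M0) Mz.
lra.
Qed.

Lemma sublevel_sub r : sublevel C f r `<=` C.
Proof. by move=> x []. Qed.

(* A point w of C is an affine combination of the points c w, (c/2) w of S_r. *)
Lemma cone_sub_Aff_sublevel r : 0 < r -> C `<=` Aff (sublevel C f r).
Proof.
move=> r0 w Cw.
have [fw|fw] := leP (f w) r; first exact: subset_Aff.
have fw0 : 0 < f w by lra.
set c := r / f w.
have c0 : 0 < c by rewrite divr_gt0.
have S1 : sublevel C f r (c *: w).
  by split; [exact: coneC | rewrite f_hom // /c mulfVK // gt_eqF].
have S2 : sublevel C f r ((c / 2) *: w).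
  split; first by apply: coneC; rewrite ?divr_gt0.
  rewrite f_hom ?divr_gt0 // /c.
  have -> : r / f w / 2 * f w = r / 2 by field; rewrite gt_eqF.
  lra.
have := Aff_comb2 S1 S2 (x := 2 / c - 1) (y := 2 - 2 / c).
rewrite !scalerA -scalerDl (_ : _ * c + _ * (c / 2) = 1) ?scale1r; last by field; rewrite gt_eqF.
by apply; lra.
Qed.

(* If f z = r, pushing z slightly outward along its ray keeps it in S_r yet
   raises f above r. *)
Lemma ri_sublevel_lt r z : 0 < r -> ri (sublevel C f r) z -> f z < r.
Proof.
move=> r0 riz; have [Cz fz] := ri_subset riz.
rewrite lt_neqAle fz andbT; apply/eqP => fzr.
move: riz => [_ [U [oU [Uz US]]]].
have [d d0 Ud] : exists2 d : R, 0 < d & forall s, `|s - 1| < d -> U (0 + s *: z).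
  by apply: open_line_ball => //; rewrite add0r scale1r.
have : U ((1 + d / 2) *: z) by rewrite -[_ *: z]add0r; apply: Ud; rewrite ltr_norml; lra.
move=> Uz'; have Cz' : C ((1 + d / 2) *: z) by apply: coneC => //; lra.
have [_] := US _ (conj Uz' (cone_sub_Aff_sublevel r0 Cz')).
rewrite f_hom ?fzr //; last by lra.
have : 0 < d / 2 * r by rewrite !mulr_gt0.
lra.
Qed.

Section Continuous.
Hypothesis fC : {within C, continuous f}.

Lemma rc_sublevel r x : rc (sublevel C f r) x -> x = 0 \/ C x /\ f x <= r.
Proof.
move=> rcx; have [->|x0] := eqVneq x 0; [by left | right].
have Cx : C x := cone_rc_neq0 coneC scvxC (rc_subset (@sublevel_sub r) rcx) (elimN eqP x0).
split=> //; rewrite leNgt; apply/negP => rfx.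
have fxr : 0 < f x - r by rewrite subr_gt0.
have [U [oU Ux HU]] := (within_continuousP C f).1 fC x Cx _ fxr.
have [y [Uy [_ [Cy fy]]]] := rcx.2 U oU Ux.
by have := HU y Uy Cy; have := ler_norm (f x - f y); lra.
Qed.

Lemma ri_sublevel r z : ri C z -> f z < r -> ri (sublevel C f r) z.
Proof.
move=> riz fz; have Cz := ri_subset riz; move: riz => [_ [U1 [oU1 [U1z U1C]]]].
have r0 : 0 < r := le_lt_trans (f_ge0 Cz) fz.
have rfz : 0 < r - f z by rewrite subr_gt0.
have [U2 [oU2 U2z HU2]] := (within_continuousP C f).1 fC z Cz _ rfz.
split; first exact: cone_sub_Aff_sublevel.
exists (U1 `&` U2); split; first exact: openI.
split=> // y [[U1y U2y] Ay].
have Cy : C y by apply: U1C; split=> //; apply: Aff_subset Ay; apply: sublevel_sub.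
split=> //; have := HU2 y U2y Cy; rewrite distrC.
by have := ler_norm (f y - f z); lra.
Qed.

Lemma sqc_strictly_sub_convex :
  strictly_quasi_convex_fun C f -> strictly_sub_convex C f.
Proof.
move=> sqcf r x y rx ry xy z xyz.
have rcC := rc_subset (@sublevel_sub r).
apply: ri_sublevel (scvxC (rcC _ rx) (rcC _ ry) xy xyz) _.
move: xyz => [[t [/andP[t0 t1] ->]] [zx zy]].
have {t0}t0 : 0 < t.
  rewrite lt_neqAle t0 andbT eq_sym; apply/eqP => t_eq0; apply: zx.
  by rewrite t_eq0 subr0 scale1r scale0r addr0.
have {t1}t1 : t < 1.
  rewrite lt_neqAle t1 andbT; apply/eqP => t_eq1; apply: zy.
  by rewrite t_eq1 subrr scale0r add0r scale1r.
case: (rc_sublevel rx) => [x0|[Cx fx]]; case: (rc_sublevel ry) => [y0|[Cy fy]].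
- by case: xy; rewrite x0 y0.
- have fy0 : 0 < f y by apply: sqc_gt0 => // y0; apply: xy; rewrite x0 y0.
  rewrite x0 scaler0 add0r f_hom //.
  have : 0 < (1 - t) * f y by rewrite mulr_gt0 // subr_gt0.
  lra.
- have fx0 : 0 < f x by apply: sqc_gt0 => // x0; apply: xy; rewrite x0 y0.
  rewrite y0 scaler0 addr0 f_hom ?subr_gt0 //.
  have : 0 < t * f x by rewrite mulr_gt0.
  lra.
- have t01 : 0 < t < 1 by rewrite t0 t1.
  have := sqcf _ _ _ Cx Cy xy t01; have : Num.max (f x) (f y) <= r by rewrite ge_max fx fy.
  lra.
Qed.

End Continuous.

Section StrictlySubConvex.
Hypothesis sscf : strictly_sub_convex C f.
Hypothesis f_eq0 : forall x, C x -> f x = 0 -> x = 0.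

Lemma ssc_gt0 x : C x -> x <> 0 -> 0 < f x.
Proof.
move=> Cx x0; rewrite lt0r f_ge0 // andbT.
by apply/eqP => /(f_eq0 Cx).
Qed.

Lemma ssc_sqc : strictly_quasi_convex_fun C f.
Proof.
move=> x y t Cx Cy xy t01.
set r := Num.max (f x) (f y).
have r0 : 0 < r.
  rewrite lt_max; apply/orP; have [x0|x0] := eqVneq x 0.
    by right; apply: ssc_gt0 => // y0; apply: xy; rewrite x0 y0.
  by left; apply: ssc_gt0 => //; apply/eqP.
have Sx : sublevel C f r x by split; rewrite ?le_max ?lexx.
have Sy : sublevel C f r y by split; rewrite ?le_max ?lexx ?orbT.
apply: ri_sublevel_lt => //.
exact: (sscf (subset_rc Sx) (subset_rc Sy) xy (open_segment_comb xy t01)).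
Qed.

(* If x were in rc S_r with r < f x, the midpoint of x and (r / f x) x would
   lie in ri S_r although f exceeds r there. *)
Lemma ssc_lsc x r : C x -> 0 < r -> r < f x ->
  exists U, [/\ open U, U x & forall y, U y -> C y -> r < f y].
Proof.
move=> Cx r0 rfx.
have fx0 : 0 < f x := lt_trans r0 rfx.
have x0 : x <> 0 by move=> x0; rewrite x0 in Cx fx0; rewrite hom_f0 // ltxx in fx0.
apply: contrapT => noU.
have rcx : rc (sublevel C f r) x.
  split; first exact: cone_sub_Aff_sublevel.
  move=> U oU Ux; apply: contrapT => noS; apply: noU; exists U; split => // y Uy Cy.
  rewrite ltNge; apply/negP => fy; apply: noS; exists y; split => //.
  by split; [exact: cone_sub_Aff_sublevel | split].
set c := r / f x.
have c0 : 0 < c by rewrite divr_gt0.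
have c1 : c < 1 by rewrite ltr_pdivrMr // mul1r.
have Scx : sublevel C f r (c *: x).
  by split; [exact: coneC | rewrite f_hom // mulfVK // gt_eqF].
have cxx : c *: x <> x by rewrite -{2}[x]scale1r; apply: scaler_neq; rewrite // lt_eqF.
have := ri_sublevel_lt r0 (strictly_convex_set_mid (@sscf r) (subset_rc Scx) rcx cxx).
rewrite -{2}[x]scale1r -scalerDl scalerA f_hom //; last by apply: mulr_gt0; lra.
rewrite (_ : 2^-1 * (c + 1) * f x = (r + f x) / 2); first lra.
by rewrite /c; field; rewrite gt_eqF.
Qed.

(* x is the midpoint of (1 - d) x and (1 + d) x, both in S_r' for r' = (1 + d) f x. *)
Lemma ssc_usc_neq0 x r : C x -> x <> 0 -> f x < r ->
  exists U, [/\ open U, U x & forall y, U y -> C y -> f y < r].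
Proof.
move=> Cx x0 fxr.
have fx0 := ssc_gt0 Cx x0.
set d := Num.min 2^-1 ((r - f x) / (2 * f x)).
have d0 : 0 < d by rewrite lt_min; apply/andP; split; [lra | rewrite divr_gt0 //; lra].
have d_le : d <= 2^-1 by rewrite ge_min lexx.
have dfx : d * f x < r - f x.
  have : d <= (r - f x) / (2 * f x) by rewrite ge_min lexx orbT.
  rewrite ler_pdivlMr; last by lra.
  lra.
set r' := (1 + d) * f x.
have r'0 : 0 < r' by rewrite mulr_gt0 //; lra.
have S1 : sublevel C f r' ((1 - d) *: x).
  split; first by apply: coneC => //; lra.
  by rewrite f_hom ?ler_wpM2r ?(ltW fx0) //; lra.
have S2 : sublevel C f r' ((1 + d) *: x).
  by split; [apply: coneC => //; lra | rewrite f_hom //; lra].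
have S12 : (1 - d) *: x <> (1 + d) *: x by apply: scaler_neq => //; apply/eqP; lra.
have := strictly_convex_set_mid (@sscf r') (subset_rc S1) (subset_rc S2) S12.
rewrite -scalerDl scalerA (_ : 2^-1 * (1 - d + (1 + d)) = 1) ?scale1r; last by field.
move=> [_ [U [oU [Ux US]]]]; exists U; split => // y Uy Cy.
have [_ fy] := US y (conj Uy (cone_sub_Aff_sublevel r'0 Cy)).
rewrite /r' in fy; lra.
Qed.

Lemma ssc_usc0_line q e : C q -> C (- q) -> q <> 0 -> 0 < e ->
  exists U, [/\ open U, U 0 & forall y, U y -> C y -> f y < e].
Proof.
move=> Cq Cnq q0 e0.
set M := Num.max (f q) (f (- q)).
have M0 : 0 < M by rewrite lt_max ssc_gt0.
set c := e / (2 * M).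
have c0 : 0 < c by rewrite divr_gt0 ?mulr_gt0.
have cM : c * M = e / 2 by rewrite /c; field; rewrite gt_eqF.
have S1 : sublevel C f (e / 2) (c *: q).
  by split; [exact: coneC | rewrite f_hom // -cM ler_wpM2l ?(ltW c0) ?le_max ?lexx].
have S2 : sublevel C f (e / 2) (c *: - q).
  by split; [exact: coneC | rewrite f_hom // -cM ler_wpM2l ?(ltW c0) ?le_max ?lexx ?orbT].
have S12 : c *: q <> c *: - q.
  by rewrite scalerN -scaleNr; apply: scaler_neq => //; apply/eqP; lra.
have := strictly_convex_set_mid (@sscf _) (subset_rc S1) (subset_rc S2) S12.
rewrite scalerN subrr scaler0 => -[_ [U [oU [U0 US]]]].
exists U; split => // y Uy Cy.
have e20 : 0 < e / 2 by rewrite divr_gt0.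
have [_ fy] := US y (conj Uy (cone_sub_Aff_sublevel e20 Cy)).
lra.
Qed.

(* Here C lies on the ray through p, where f p = e.  Since - p is not in rc C,
   some neighbourhood of - p misses C; translated by p it becomes a
   neighbourhood of 0 excluding every l p with l >= 1. *)
Lemma ssc_usc0_pointed e : C 0 -> (forall q, C q -> C (- q) -> q = 0) -> 0 < e ->
  exists U, [/\ open U, U 0 & forall y, U y -> C y -> f y < e].
Proof.
move=> C0 pointedC e0.
have [C_0|[p0 [Cp0 p00]]] : (forall y, C y -> y = 0) \/ exists p0, C p0 /\ p0 <> 0.
  case: (pselect (exists p0, C p0 /\ p0 <> 0)) => [|noC]; [by right | left => y Cy].
  by apply: contrapT => y0; apply: noC; exists y.
  by exists setT; split=> [||y _ /C_0 ->]; rewrite ?hom_f0 //; exact: openT.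
have fp00 := ssc_gt0 Cp0 p00.
set p := (e / f p0) *: p0.
have Cp : C p by apply: coneC; rewrite ?divr_gt0.
have fp : f p = e by rewrite f_hom ?divr_gt0 // mulfVK // gt_eqF.
have p0' : p <> 0 by rewrite /p => /eqP; rewrite scaler_eq0 gt_eqF ?divr_gt0 // => /eqP.
have [U [oU Unp UC]] : exists U, [/\ open U, U (- p) & forall y, U y -> Aff C y -> ~ C y].
  apply: contrapT => noU; apply: (p0'); apply: (pointedC _ Cp).
  apply: (cone_rc_neq0 coneC scvxC); last by move=> /eqP; rewrite oppr_eq0 => /eqP.
  split; first exact: Aff_cone_opp.
  move=> U oU Unp; apply: contrapT => noC; apply: noU; exists U; split=> // y Uy Ay Cy.
  by apply: noC; exists y.
exists ((fun w => 1 *: w + - p) @^-1` U); split.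
- exact: open_affine_preimage.
- by rewrite /preimage /= scaler0 add0r.
move=> w; rewrite /preimage /= scale1r => Uw Cw.
have [->|w0] := eqVneq w 0; first by rewrite hom_f0.
have [l l0 wl] := pointed_cone_ray coneC scvxC pointedC Cp p0' Cw (elimN eqP w0).
rewrite wl f_hom // fp -[X in _ < X]mul1r ltr_pM2r // ltNge; apply/negP => l1.
have Cl1 : C ((l - 1) *: p).
  have [->|l1'] := eqVneq l 1; first by rewrite subrr scale0r.
  by apply: coneC; rewrite // subr_gt0 lt_neqAle eq_sym l1' l1.
apply: (UC _ _ (subset_Aff Cl1) Cl1).
by rewrite scalerBl scale1r -wl.
Qed.

Lemma ssc_usc x r : C x -> f x < r ->
  exists U, [/\ open U, U x & forall y, U y -> C y -> f y < r].
Proof.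
move=> Cx fxr; have [x0|x0] := eqVneq x 0; last exact: ssc_usc_neq0 (elimN eqP x0) _.
rewrite x0 in Cx fxr *; rewrite hom_f0 // in fxr.
case: (pselect (exists q, [/\ C q, C (- q) & q <> 0])) => [[q [Cq Cnq q0]]|noline].
  exact: ssc_usc0_line Cq Cnq q0 fxr.
apply: ssc_usc0_pointed => // q Cq Cnq.
by apply: contrapT => q0; apply: noline; exists q.
Qed.

Lemma ssc_continuous : {within C, continuous f}.
Proof.
apply/within_continuousP => x Cx e e0.
have fxe : f x < f x + e by lra.
have [U1 [oU1 U1x fU1]] := ssc_usc Cx fxe.
have [fx0|fx0] := eqVneq (f x) 0.
  exists U1; split=> // y U1y Cy.
  by rewrite fx0 sub0r normrN ger0_norm ?f_ge0 //; have := fU1 y U1y Cy; lra.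
have {fx0}fx0 : 0 < f x by rewrite lt0r fx0 f_ge0.
set r := Num.max (f x - e) (f x / 2).
have r0 : 0 < r by rewrite lt_max divr_gt0 ?orbT.
have rfx : r < f x by rewrite gt_max; apply/andP; split; lra.
have [U2 [oU2 U2x fU2]] := ssc_lsc Cx r0 rfx.
exists (U1 `&` U2); split; [exact: openI | by [] |].
move=> y [U1y U2y] Cy; have := fU1 y U1y Cy; have := fU2 y U2y Cy.
by rewrite gt_max ltr_norml => /andP[? ?] ?; apply/andP; split; lra.
Qed.

End StrictlySubConvex.
End HomogeneousFunction.

Theorem mainTheorem4 (R : realType) (V : topologicalLmodType R)
  (C : set V) (f : V -> R)
  (hne : C !=set0) (hcone : is_cone C) (hsc : strictly_convex_set C)
  (hnn : forall x, C x -> 0 <= f x)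
  (hhom : forall (l : R) x, 0 < l -> C x -> f (l *: x) = l * f x)
  (alpha : R) (halpha : 1 < alpha) :
  (({within C, continuous f} /\
      strictly_convex_fun C (fun x => f x `^ alpha))
   <-> ({within C, continuous f} /\ strictly_quasi_convex_fun C f))
  /\
  (({within C, continuous f} /\ strictly_quasi_convex_fun C f)
   <-> (strictly_sub_convex C f /\ (forall x, C x -> f x = 0 -> x = 0))).
Proof.
split; split.
- move=> [fC scvxfa]; split=> //.
  exact: (powR_strictly_convex_sqc hnn halpha scvxfa).
- move=> [fC sqcf]; split=> //.
  exact: (sqc_powR_strictly_convex hcone hsc hnn hhom sqcf halpha).
- move=> [fC sqcf]; split.
    exact: (sqc_strictly_sub_convex hcone hsc hnn hhom fC sqcf).
  exact: (sqc_eq0 hcone hnn hhom sqcf).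
- move=> [sscf f_eq0]; split.
    exact: (ssc_continuous hcone hsc hnn hhom sscf f_eq0).
  exact: (ssc_sqc hcone hnn hhom sscf f_eq0).
Qed.
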